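(* Let $\mathcal{A}$ be an infinite-dimensional separable Hilbert space with orthonormal basis $\{e_i\}_{i\in\mathbb{N}}$ and let $\{c_{ki}\}_{i,k\in\mathbb{N}}$ be scalars satisfying $$K:=\sup_{i\in\mathbb{N}}\sum_{k=1}^{\infty}|c_{ki}|^2<\infty.$$ Then the product $v\cdot w:=\sum_{k=1}^{\infty}\big(\sum_{i=1}^{\infty}v_iw_ic_{ki}\big)e_k$ (for $v=\sum_iv_ie_i$, $w=\sum_iw_ie_i$) is well defined on $\mathcal{A}$ and makes $\mathcal{A}$ a Hilbert evolution algebra with orthonormal natural basis $\{e_i\}$ and structure constants $c_{ki}$.
   Context: A (separable) Hilbert evolution algebra is a real or complex separable Hilbert space $(\mathcal{A},\langle\cdot,\cdot\rangle)$ equipped with a bilinear product $\cdot:\mathcal{A}\times\mathcal{A}\to\mathcal{A}$ such that: (i) there exist an orthonormal basis $\{e_i\}_{i\in\mathbb{N}}$ (called an orthonormal natural basis) and scalars $\{c_{ki}\}_{i,k\in\mathbb{N}}$ (the structure constants) with $e_i\cdot e_i=\sum_{k=1}^\infty c_{ki}e_k$ and $e_i\cdot e_j=0$ for $i\neq j$; (ii) for every $v\in\mathcal{A}$ the left multiplication $L_v:\mathcal{A}\to\mathcal{A}$, $L_v(w)=v\cdot w$, is continuous, i.e. there is $M_v>0$ with $\|L_v(w)\|\le M_v\|w\|$ for all $w\in\mathcal{A}$. *)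

From HB Require Import structures.
From mathcomp Require Import all_boot all_order all_algebra.
From mathcomp Require Import complex.
From mathcomp Require Import reals.
Set Implicit Arguments. Unset Strict Implicit. Unset Printing Implicit Defensive.
Import Order.TTheory GRing.Theory Num.Theory.
Local Open Scope ring_scope.

Section HilbertDefs.
Variables (K : numFieldType) (cj : K -> K) (V : lmodType K) (ip : V -> V -> K).

Definition kconv (s : nat -> K) (l : K) : Prop :=
  forall eps : K, 0 < eps -> exists N : nat,
    forall n : nat, (N <= n)%N -> `|s n - l| < eps.

Definition nsq (v : V) : K := ip v v.

Definition vconv (s : nat -> V) (l : V) : Prop :=
  forall eps : K, 0 < eps -> exists N : nat,
    forall n : nat, (N <= n)%N -> nsq (s n - l) < eps.

Definition vcauchy (s : nat -> V) : Prop :=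
  forall eps : K, 0 < eps -> exists N : nat,
    forall m n : nat, (N <= m)%N -> (N <= n)%N -> nsq (s m - s n) < eps.

(* (V, ip) is a Hilbert space over K, where cj is the conjugation of K
   (identity for real scalars, complex conjugation for complex scalars). *)
Definition hilbert_space : Prop :=
  [/\ (forall (a : K) (u v w : V), ip (a *: u + v) w = a * ip u w + ip v w),
      (forall u v : V, ip v u = cj (ip u v)),
      (forall v : V, 0 <= ip v v),
      (forall v : V, ip v v = 0 -> v = 0) &
      (forall s : nat -> V, vcauchy s -> exists l : V, vconv s l)].

Definition orthonormal_basis (e : nat -> V) : Prop :=
  (forall i j : nat, ip (e i) (e j) = (i == j)%:R) /\
  (forall v : V, vconv (fun n => \sum_(i < n) ip v (e i) *: e i) v).

Definition hilbert_evolution_algebra (prod : V -> V -> V)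
    (e : nat -> V) (c : nat -> nat -> K) : Prop :=
  [/\ hilbert_space,
      orthonormal_basis e &
  [/\
      (forall (a : K) (u v w : V), prod (a *: u + v) w = a *: prod u w + prod v w),
      (forall (a : K) (u v w : V), prod u (a *: v + w) = a *: prod u v + prod u w),
      (forall i : nat, vconv (fun n => \sum_(k < n) c k i *: e k) (prod (e i) (e i))),
      (forall i j : nat, i != j -> prod (e i) (e j) = 0) &
      (* continuity of every left multiplication: ||v.w|| <= M_v ||w||,
         written with squared norms *)
      (forall v : V, exists M : K, 0 < M /\
         forall w : V, nsq (prod v w) <= M ^+ 2 * nsq w)]].

Definition theorem_for : Prop :=
  forall (e : nat -> V) (c : nat -> nat -> K),
    hilbert_space -> orthonormal_basis e ->
    (* K := sup_i sum_k |c_{ki}|^2 < oo *)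
    (exists B : K, forall (i n : nat), \sum_(k < n) `|c k i| ^+ 2 <= B) ->
    exists prod : V -> V -> V,
      (forall v w : V, exists a : nat -> K,
         (forall k : nat,
            kconv (fun n => \sum_(i < n) ip v (e i) * ip w (e i) * c k i) (a k)) /\
         vconv (fun n => \sum_(k < n) a k *: e k) (prod v w)) /\
      hilbert_evolution_algebra prod e c.

End HilbertDefs.

(* Write
   v_i = <v, e_i>.  By Cauchy-Schwarz,
     |sum_(m<=i<n) v_i w_i c_ki|^2
       <= (sum_(m<=i<n) |v_i|^2) (sum_(m<=i<n) |w_i|^2 |c_ki|^2),
   so every coordinate series sum_i v_i w_i c_ki is Cauchy (its blocks are
   controlled by the tails of the Fourier series of v) and converges to some
   a_k; summing the same estimate over k bounds sum_k |a_k|^2 by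
   2 K ||v||^2 ||w||^2.  Hence sum_k a_k e_k converges; its limit is v . w,
   and ||v . w||^2 <= 4 K ||v||^2 ||w||^2.  Bilinearity, the values on the
   basis and the boundedness of left multiplications then follow from the
   uniqueness of limits.

   The argument is carried out once, for a numeric field K whose norm takes
   values in an embedded real field R (which supplies the completeness
   arguments) and whose conjugation cj satisfies x * cj x = |x|^2; all norm
   estimates are made on squared norms, in R.  Completeness of the scalars
   is derived from that of V along the line spanned by e_0.  The theorem is
   the instance K = R, cj = id, and K = R[i], cj = complex conjugation. *)

From HB Require Import structures.
From mathcomp Require Import all_boot all_order all_algebra.
From mathcomp Require Import complex.
From mathcomp Require Import classical_sets reals.
From mathcomp Require Import ring lra.
From mathcomp Require Import boolp.
Import Order.TTheory GRing.Theory Num.Theory.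
Local Open Scope ring_scope.

Lemma big_nat_sub {V : zmodType} (F : nat -> V) m n : (m <= n)%N ->
  \sum_(m <= i < n) F i = \sum_(0 <= i < n) F i - \sum_(0 <= i < m) F i.
Proof. by move=> mn; rewrite (@big_cat_nat _ _ _ m 0 n _ _ (leq0n m) mn) /= addrC addrK. Qed.

(* Cauchy-Schwarz for finite real sums, from Lagrange's identity
   sum_i sum_j (a_i b_j - a_j b_i)^2 = 2 (A B - S^2). *)
Lemma cauchy_schwarz_nat {R : realType} (a b : nat -> R) m n :
  (\sum_(m <= i < n) a i * b i) ^+ 2 <=
  (\sum_(m <= i < n) a i ^+ 2) * (\sum_(m <= i < n) b i ^+ 2).
Proof.
set S := \sum_(m <= i < n) a i * b i.
set A := \sum_(m <= i < n) a i ^+ 2; set B := \sum_(m <= i < n) b i ^+ 2.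
have lagrange : \sum_(m <= i < n) \sum_(m <= j < n) (a i * b j - a j * b i) ^+ 2
    = 2 * (A * B - S ^+ 2).
  have inner i : \sum_(m <= j < n) (a i * b j - a j * b i) ^+ 2
      = a i ^+ 2 * B + b i ^+ 2 * A - 2 * (a i * b i) * S.
    rewrite /A /B /S !mulr_sumr -!big_split -sumrB /=.
    by apply: eq_bigr => j _; ring.
  rewrite (eq_bigr _ (fun i _ => inner i)) sumrB big_split /=.
  by rewrite -!mulr_suml -mulr_sumr -/A -/B -/S; ring.
have : 0 <= 2 * (A * B - S ^+ 2).
  by rewrite -lagrange; apply: sumr_ge0 => i _; apply: sumr_ge0 => j _; apply: sqr_ge0.
by rewrite pmulr_rge0 // subr_ge0.
Qed.

Lemma nondecreasing_bounded_cauchy {R : realType} (s : nat -> R) (B : R) :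
  (forall n, s n <= s n.+1) -> (forall n, s n <= B) ->
  forall eps, 0 < eps -> exists N, forall m n, (N <= m <= n)%N -> s n - s m < eps.
Proof.
move=> s_incr s_le eps eps_gt0.
have s_mono m n : (m <= n)%N -> s m <= s n.
  move=> /subnK <-; elim: (n - m)%N => [|k IH]; first by rewrite add0n.
  by rewrite addSn (le_trans IH).
pose E : set R := fun x => exists n, x = s n.
have supE : has_sup E by split; [exists (s 0%N), 0%N | exists B => x [n ->]].
have [x [N ->] close] := sup_adherent eps_gt0 supE.
exists N => m n /andP[Nm mn].
have : s n <= sup E by apply: sup_upper_bound => //; exists n.
have := s_mono _ _ Nm; lra.
Qed.

Section Scalars.
Variables (R : realType) (K : numFieldType) (emb : {rmorphism R -> K}).
Variables (nK : K -> R) (cj : {rmorphism K -> K}).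
Hypotheses (normE : forall x, `|x| = emb (nK x))
  (emb_le : forall r s, (emb r <= emb s) = (r <= s))
  (mul_conj : forall x, x * cj x = emb (nK x ^+ 2)).

Lemma emb_lt r s : (emb r < emb s) = (r < s).
Proof. by rewrite !lt_def emb_le (inj_eq (fmorph_inj emb)). Qed.

Lemma emb_gt0 r : (0 < emb r) = (0 < r).
Proof. by rewrite -(rmorph0 emb) emb_lt. Qed.

Lemma nK_ge0 x : 0 <= nK x.
Proof. by rewrite -emb_le rmorph0 -normE. Qed.

Lemma nK_emb r : 0 <= r -> nK (emb r) = r.
Proof.
move=> r_ge0; apply: (fmorph_inj emb).
by rewrite -normE ger0_norm // -(rmorph0 emb) emb_le.
Qed.

Lemma ge0_emb x : 0 <= x -> x = emb (nK x).
Proof. by move=> x_ge0; rewrite -normE ger0_norm. Qed.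

Lemma nKM x y : nK (x * y) = nK x * nK y.
Proof. by apply: (fmorph_inj emb); rewrite rmorphM -!normE normrM. Qed.

Lemma nKN x : nK (- x) = nK x.
Proof. by apply: (fmorph_inj emb); rewrite -!normE normrN. Qed.

Lemma nKB x y : nK (x - y) = nK (y - x).
Proof. by rewrite -nKN opprB. Qed.

Lemma nK0 : nK 0 = 0.
Proof. by rewrite -(rmorph0 emb) nK_emb. Qed.

Lemma nK1 : nK 1 = 1.
Proof. by rewrite -(rmorph1 emb) nK_emb. Qed.

Lemma nK_eq0 x : nK x = 0 -> x = 0.
Proof. by move=> nx0; apply/eqP; rewrite -normr_eq0 normE nx0 rmorph0. Qed.

Lemma nKD x y : nK (x + y) <= nK x + nK y.
Proof. by rewrite -emb_le rmorphD -!normE ler_normD. Qed.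

Lemma nK_sum (F : nat -> K) m n :
  nK (\sum_(m <= i < n) F i) <= \sum_(m <= i < n) nK (F i).
Proof.
elim: n => [|n IH]; first by rewrite !big_geq // nK0.
case: (leqP m n) => mn; last by rewrite !big_geq // nK0.
by rewrite !big_nat_recr //= (le_trans (nKD _ _)) // lerD2r.
Qed.

Lemma pos_emb (eps : K) : 0 < eps -> eps = emb (nK eps) /\ 0 < nK eps.
Proof. by move=> eps_gt0; rewrite -emb_gt0 -ge0_emb ?ltW. Qed.

Definition kconvR (s : nat -> K) (l : K) :=
  forall eps : R, 0 < eps -> exists N, forall n, (N <= n)%N -> nK (s n - l) < eps.

Definition kcauchyR (s : nat -> K) :=
  forall eps : R, 0 < eps -> exists N, forall m n,
    (N <= m)%N -> (N <= n)%N -> nK (s m - s n) < eps.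

Lemma kconvP s l : kconv s l <-> kconvR s l.
Proof.
split=> conv eps eps_gt0.
  have [N HN] := conv (emb eps) ltac:(by rewrite emb_gt0).
  by exists N => n Nn; rewrite -emb_lt -normE HN.
have [eps_emb nK_gt0] := pos_emb _ eps_gt0; have [N HN] := conv _ nK_gt0.
by exists N => n Nn; rewrite normE eps_emb emb_lt HN.
Qed.

Lemma kconvR_ext {s t l} : (forall n, s n = t n) -> kconvR s l -> kconvR t l.
Proof. by move=> st conv eps /conv[N HN]; exists N => n /HN; rewrite st. Qed.

Lemma kconvR_eventually s l :
  (exists N, forall n, (N <= n)%N -> s n = l) -> kconvR s l.
Proof. by move=> [N HN] eps eps_gt0; exists N => n /HN ->; rewrite subrr nK0. Qed.

Lemma kconvR_uniq {s l l'} : kconvR s l -> kconvR s l' -> l = l'.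
Proof.
move=> conv conv'; apply/eqP; rewrite -subr_eq0; apply/eqP; apply: nK_eq0.
apply/eqP; rewrite eq_le nK_ge0 andbT; apply/ler_addgt0Pr => eps eps_gt0.
have [N HN] := conv _ (divr_gt0 eps_gt0 (ltr0Sn _ 1)).
have [N' HN'] := conv' _ (divr_gt0 eps_gt0 (ltr0Sn _ 1)).
have := HN _ (leq_maxl N N'); have := HN' _ (leq_maxr N N').
set x := s _ => lt' lt.
have -> : l - l' = (x - l') + (- (x - l)) by rewrite opprB [RHS]addrC addrA subrK.
by apply: (le_trans (nKD _ _)); rewrite nKN add0r; lra.
Qed.

Lemma kconvR_lin (a : K) {s t l m} : kconvR s l -> kconvR t m ->
  kconvR (fun n => a * s n + t n) (a * l + m).
Proof.
move=> conv_s conv_t eps eps_gt0.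
set A := nK a + 1; have A_gt0 : 0 < A by rewrite ltr_wpDl ?nK_ge0.
have [N1 HN1] := conv_s (eps / (2 * A)) ltac:(by rewrite divr_gt0 ?mulr_gt0).
have [N2 HN2] := conv_t (eps / 2) ltac:(by rewrite divr_gt0).
exists (maxn N1 N2) => n; rewrite geq_max => /andP[/HN1 lt1 /HN2 lt2].
have -> : a * s n + t n - (a * l + m) = a * (s n - l) + (t n - m).
  by rewrite mulrBr opprD addrACA.
apply: (le_lt_trans (nKD _ _)); rewrite nKM.
have : nK a * nK (s n - l) <= A * (eps / (2 * A)).
  by apply: ler_pM; [exact: nK_ge0 | exact: nK_ge0 | rewrite lerDl | exact: ltW].
have -> : A * (eps / (2 * A)) = eps / 2 by field; rewrite gt_eqF.
lra.
Qed.

Section InnerProduct.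
Variables (V : lmodType K) (ip : V -> V -> K).
Hypotheses (ipL : forall a u v w, ip (a *: u + v) w = a * ip u w + ip v w)
  (ip_conj : forall u v, ip v u = cj (ip u v))
  (ip_ge0 : forall v, 0 <= ip v v)
  (ip_eq0 : forall v, ip v v = 0 -> v = 0).

Lemma ip0l w : ip 0 w = 0.
Proof.
have := ipL 1 0 0 w; rewrite scale1r mul1r addr0 => ip00.
by apply: (@addrI _ (ip 0 w)); rewrite -ip00 addr0.
Qed.

Lemma ipDl u v w : ip (u + v) w = ip u w + ip v w.
Proof. by have := ipL 1 u v w; rewrite scale1r mul1r. Qed.

Lemma ipZl a u w : ip (a *: u) w = a * ip u w.
Proof. by have := ipL a u 0 w; rewrite !addr0 ip0l addr0. Qed.

Lemma ipNl u w : ip (- u) w = - ip u w.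
Proof. by rewrite -scaleN1r ipZl mulN1r. Qed.

Lemma ipBl u v w : ip (u - v) w = ip u w - ip v w.
Proof. by rewrite ipDl ipNl. Qed.

Lemma ip0r w : ip w 0 = 0.
Proof. by rewrite ip_conj ip0l rmorph0. Qed.

Lemma ipDr u v w : ip u (v + w) = ip u v + ip u w.
Proof. by rewrite ip_conj ipDl rmorphD -!ip_conj. Qed.

Lemma ipZr a u w : ip u (a *: w) = cj a * ip u w.
Proof. by rewrite ip_conj ipZl rmorphM -ip_conj. Qed.

Lemma ipNr u w : ip u (- w) = - ip u w.
Proof. by rewrite ip_conj ipNl rmorphN -ip_conj. Qed.

Lemma ipBr u v w : ip u (v - w) = ip u v - ip u w.
Proof. by rewrite ipDr ipNr. Qed.

Lemma ip_suml (I : Type) (r : seq I) (P : pred I) (F : I -> V) w :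
  ip (\sum_(i <- r | P i) F i) w = \sum_(i <- r | P i) ip (F i) w.
Proof. exact: (big_morph (ip^~ w) (fun u v => ipDl u v w) (ip0l w)). Qed.

Lemma ip_sumr (I : Type) (r : seq I) (P : pred I) (F : I -> V) w :
  ip w (\sum_(i <- r | P i) F i) = \sum_(i <- r | P i) ip w (F i).
Proof. exact: (big_morph (ip w) (ipDr w) (ip0r w)). Qed.

Definition Nv (x : V) : R := nK (nsq ip x).

Lemma nsq_emb x : nsq ip x = emb (Nv x).
Proof. exact: ge0_emb _ (ip_ge0 x). Qed.

Lemma Nv_ge0 x : 0 <= Nv x.
Proof. exact: nK_ge0. Qed.

Lemma Nv0 : Nv 0 = 0.
Proof. by rewrite /Nv /nsq ip0l nK0. Qed.

Lemma Nv_eq0 x : Nv x = 0 -> x = 0.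
Proof. by move=> Nx0; apply: ip_eq0; rewrite -/(nsq ip x) nsq_emb Nx0 rmorph0. Qed.

Lemma NvZ a x : Nv (a *: x) = nK a ^+ 2 * Nv x.
Proof.
apply: (fmorph_inj emb); rewrite -nsq_emb rmorphM -mul_conj -nsq_emb /nsq.
by rewrite ipZl ipZr mulrA.
Qed.

Lemma NvN x : Nv (- x) = Nv x.
Proof. by rewrite -scaleN1r NvZ nKN nK1 expr1n mul1r. Qed.

Lemma NvB x y : Nv (x - y) = Nv (y - x).
Proof. by rewrite -NvN opprB. Qed.

(* Parallelogram law, and the resulting substitute for the triangle
   inequality on squared norms. *)
Lemma Nv_parallelogram x y : Nv (x + y) + Nv (x - y) = 2 * Nv x + 2 * Nv y.
Proof.
apply: (fmorph_inj emb); rewrite !rmorphD !rmorphM /= rmorph_nat -!nsq_emb /nsq.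
by rewrite !ipDl !ipDr !ipNl !ipNr; ring.
Qed.

Lemma NvD_le x y : Nv (x + y) <= 2 * Nv x + 2 * Nv y.
Proof. by rewrite -Nv_parallelogram lerDl Nv_ge0. Qed.

Definition vconvR (s : nat -> V) (l : V) :=
  forall eps : R, 0 < eps -> exists N, forall n, (N <= n)%N -> Nv (s n - l) < eps.

Definition vcauchyR (s : nat -> V) :=
  forall eps : R, 0 < eps -> exists N, forall m n,
    (N <= m)%N -> (N <= n)%N -> Nv (s m - s n) < eps.

Lemma vconvP s l : vconv ip s l <-> vconvR s l.
Proof.
split=> conv eps eps_gt0.
  have [N HN] := conv (emb eps) ltac:(by rewrite emb_gt0).
  by exists N => n Nn; rewrite -emb_lt -nsq_emb HN.
have [eps_emb nK_gt0] := pos_emb _ eps_gt0; have [N HN] := conv _ nK_gt0.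
by exists N => n Nn; rewrite nsq_emb eps_emb emb_lt HN.
Qed.

Lemma vcauchyP s : vcauchy ip s <-> vcauchyR s.
Proof.
split=> cauchy eps eps_gt0.
  have [N HN] := cauchy (emb eps) ltac:(by rewrite emb_gt0).
  by exists N => m n Nm Nn; rewrite -emb_lt -nsq_emb HN.
have [eps_emb nK_gt0] := pos_emb _ eps_gt0; have [N HN] := cauchy _ nK_gt0.
by exists N => m n Nm Nn; rewrite nsq_emb eps_emb emb_lt HN.
Qed.

Lemma vconvR_ext {s t l} : (forall n, s n = t n) -> vconvR s l -> vconvR t l.
Proof. by move=> st conv eps /conv[N HN]; exists N => n /HN; rewrite st. Qed.

Lemma vconvR_const x : vconvR (fun _ => x) x.
Proof. by move=> eps eps_gt0; exists 0%N => n _; rewrite subrr Nv0. Qed.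

(* A bound on the squared norms of a convergent sequence passes to the limit,
   up to the factor 2 of NvD_le. *)
Lemma Nv_limit_le {s l} B : vconvR s l -> (forall n, Nv (s n) <= B) -> Nv l <= 2 * B.
Proof.
move=> conv s_le; apply/ler_addgt0Pr => eps eps_gt0.
have [N HN] := conv (eps / 2) ltac:(by rewrite divr_gt0).
have -> : l = s N + - (s N - l) by rewrite opprB addrC subrK.
apply: (le_trans (NvD_le _ _)); rewrite NvN.
by have := s_le N; have := HN N (leqnn N); lra.
Qed.

Lemma vconvR_uniq {s l l'} : vconvR s l -> vconvR s l' -> l = l'.
Proof.
move=> conv conv'; apply/eqP; rewrite -subr_eq0; apply/eqP; apply: Nv_eq0.
apply/eqP; rewrite eq_le Nv_ge0 andbT; apply/ler_addgt0Pr => eps eps_gt0.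
have [N HN] := conv _ (divr_gt0 eps_gt0 (ltr0Sn _ 3)).
have [N' HN'] := conv' _ (divr_gt0 eps_gt0 (ltr0Sn _ 3)).
have := HN _ (leq_maxl N N'); have := HN' _ (leq_maxr N N').
set x := s _ => lt' lt.
have -> : l - l' = (x - l') + (- (x - l)) by rewrite opprB [RHS]addrC addrA subrK.
by apply: (le_trans (NvD_le _ _)); rewrite NvN add0r; lra.
Qed.

Lemma vconvR_lin (a : K) {s t l m} : vconvR s l -> vconvR t m ->
  vconvR (fun n => a *: s n + t n) (a *: l + m).
Proof.
move=> conv_s conv_t eps eps_gt0.
set A := nK a ^+ 2 + 1; have A_gt0 : 0 < A by rewrite ltr_wpDl ?sqr_ge0.
have [N1 HN1] := conv_s (eps / (4 * A)) ltac:(by rewrite divr_gt0 ?mulr_gt0).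
have [N2 HN2] := conv_t (eps / 4) ltac:(by rewrite divr_gt0).
exists (maxn N1 N2) => n; rewrite geq_max => /andP[/HN1 lt1 /HN2 lt2].
have -> : a *: s n + t n - (a *: l + m) = a *: (s n - l) + (t n - m).
  by rewrite scalerBr opprD addrACA.
apply: (le_lt_trans (NvD_le _ _)); rewrite NvZ.
have : nK a ^+ 2 * Nv (s n - l) <= A * (eps / (4 * A)).
  by apply: ler_pM; [exact: sqr_ge0 | exact: Nv_ge0 | rewrite lerDl | exact: ltW].
have -> : A * (eps / (4 * A)) = eps / 4 by field; rewrite gt_eqF.
lra.
Qed.

Lemma vconvR_scale {s a} x : kconvR s a -> vconvR (fun n => s n *: x) (a *: x).
Proof.
move=> conv eps eps_gt0.
set X := Nv x + 1; have X_gt0 : 0 < X by rewrite ltr_wpDl ?Nv_ge0.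
have d_gt0 : 0 < eps / X by rewrite divr_gt0.
have [N HN] := conv (Num.sqrt (eps / X)) ltac:(by rewrite sqrtr_gt0).
exists N => n /HN lt_sqrt; rewrite -scalerBl NvZ.
have lt_sq : nK (s n - a) ^+ 2 < eps / X.
  by rewrite -(sqr_sqrtr (ltW d_gt0)) ltr_pXn2r ?nnegrE ?nK_ge0 ?sqrtr_ge0.
apply: (le_lt_trans (y := nK (s n - a) ^+ 2 * X)).
  by rewrite ler_wpM2l ?sqr_ge0 // lerDl.
by rewrite -ltr_pdivlMr.
Qed.

Lemma vconvR_comb (s : nat -> nat -> K) (a : nat -> K) (x : nat -> V) N :
  (forall k, kconvR (s k) (a k)) ->
  vconvR (fun n => \sum_(0 <= k < N) s k n *: x k) (\sum_(0 <= k < N) a k *: x k).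
Proof.
move=> conv; elim: N => [|N IH].
  rewrite big_geq //; apply: (@vconvR_ext (fun _ => 0)); last exact: vconvR_const.
  by move=> n; rewrite big_geq.
apply: (@vconvR_ext (fun n => 1 *: (s N n *: x N) + \sum_(0 <= k < N) s k n *: x k)).
  by move=> n; rewrite big_nat_recr //= scale1r addrC.
rewrite big_nat_recr //= addrC -[X in X + _]scale1r.
exact: vconvR_lin (vconvR_scale _ (conv N)) IH.
Qed.

Lemma Nv_add_orth x y : ip x y = 0 -> Nv (x + y) = Nv x + Nv y.
Proof.
move=> xy0; apply: (fmorph_inj emb); rewrite rmorphD -!nsq_emb /nsq.
by rewrite ipDl !ipDr xy0 (ip_conj x y) xy0 rmorph0 addr0 add0r.
Qed.

Section Orthonormal.
Variable e : nat -> V.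
Hypothesis e_orthonormal : forall i j, ip (e i) (e j) = (i == j)%:R.

Lemma Nv_e i : Nv (e i) = 1.
Proof. by rewrite /Nv /nsq e_orthonormal eqxx nK1. Qed.

Lemma ip_comb_e (F : nat -> K) m n j : (n <= j)%N ->
  ip (\sum_(m <= k < n) F k *: e k) (e j) = 0.
Proof.
move=> nj; rewrite ip_suml big_nat_cond big1 // => k /andP[/andP[_ kn] _].
by rewrite ipZl e_orthonormal ltn_eqF ?mulr0 // (leq_trans kn nj).
Qed.

Lemma Nv_comb (F : nat -> K) m n :
  Nv (\sum_(m <= k < n) F k *: e k) = \sum_(m <= k < n) nK (F k) ^+ 2.
Proof.
elim: n => [|n IH]; first by rewrite !big_geq // Nv0.
case: (leqP m n) => mn; last by rewrite !big_geq // Nv0.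
rewrite !big_nat_recr //= Nv_add_orth ?IH ?NvZ ?Nv_e ?mulr1 //.
by rewrite ipZr ip_comb_e ?mulr0.
Qed.

(* Bessel's inequality, from 0 <= ||v - sum_k v_k e_k||^2. *)
Lemma bessel v m n : \sum_(m <= k < n) nK (ip v (e k)) ^+ 2 <= Nv v.
Proof.
set S := \sum_(m <= k < n) ip v (e k) *: e k.
set X := \sum_(m <= k < n) nK (ip v (e k)) ^+ 2.
have ip_Sv : ip S v = emb X.
  rewrite ip_suml rmorph_sum; apply: eq_bigr => k _.
  by rewrite ipZl (ip_conj v (e k)) mul_conj.
have ip_vS : ip v S = emb X.
  rewrite ip_sumr rmorph_sum; apply: eq_bigr => k _.
  by rewrite ipZr mulrC mul_conj.
have ip_SS : ip S S = emb X by rewrite -/(nsq ip S) nsq_emb Nv_comb.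
have : 0 <= ip (v - S) (v - S) by [].
rewrite ipBl !ipBr ip_Sv ip_vS ip_SS -/(nsq ip v) nsq_emb.
by rewrite subrr subr0 subr_ge0 emb_le.
Qed.

Hypothesis ip_complete : forall s, vcauchy ip s -> exists l, vconv ip s l.

Lemma complete s : vcauchyR s -> exists l, vconvR s l.
Proof. by move=> /vcauchyP/ip_complete[l /vconvP]; exists l. Qed.

(* The scalars are complete as well: a Cauchy sequence s gives the Cauchy
   sequence s n *: e 0, whose limit has coordinate lim s along e 0. *)
Lemma kcomplete s : kcauchyR s -> exists l, kconvR s l.
Proof.
move=> cauchy; pose X n := s n *: e 0.
have NvX m n : Nv (X m - X n) = nK (s m - s n) ^+ 2.
  by rewrite /X -scalerBl NvZ Nv_e mulr1.
have [x conv] : exists x, vconvR X x.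
  apply: complete => eps eps_gt0.
  have [N HN] := cauchy (Num.sqrt eps) ltac:(by rewrite sqrtr_gt0).
  exists N => m n /HN/[apply] lt_sqrt; rewrite NvX -(sqr_sqrtr (ltW eps_gt0)).
  by rewrite ltr_pXn2r ?nnegrE ?nK_ge0 ?sqrtr_ge0.
exists (ip x (e 0)) => eps eps_gt0.
have [N HN] := conv (eps ^+ 2) ltac:(by rewrite exprn_gt0).
exists N => n /HN lt_sq; rewrite -(ltr_pXn2r (n := 2)) ?nnegrE ?nK_ge0 ?ltW //.
apply: le_lt_trans lt_sq; have := bessel (X n - x) 0 1.
by rewrite big_nat1 ipBl /X ipZl e_orthonormal eqxx mulr1.
Qed.

Hypothesis e_expansion :
  forall v, vconv ip (fun n => \sum_(i < n) ip v (e i) *: e i) v.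

Lemma fourier_tail v eps : 0 < eps -> exists N, forall m n, (N <= m <= n)%N ->
  \sum_(m <= i < n) nK (ip v (e i)) ^+ 2 < eps.
Proof.
move=> eps_gt0; pose S n := \sum_(0 <= i < n) ip v (e i) *: e i.
have conv : vconvR S v.
  by move/vconvP: (e_expansion v); apply: vconvR_ext => n; rewrite /S big_mkord.
have [N HN] := conv (eps / 4) ltac:(by rewrite divr_gt0).
exists N => m n /andP[Nm mn].
rewrite -Nv_comb (big_nat_sub _ _ _ mn) -/(S n) -/(S m).
have -> : S n - S m = (S n - v) + (- (S m - v)) by rewrite opprB addrA subrK.
apply: (le_lt_trans (NvD_le _ _)); rewrite NvN.
by have := HN _ Nm; have := HN _ (leq_trans Nm mn); lra.
Qed.

Section Product.
Variables (c : nat -> nat -> K) (Bc : K).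
Hypothesis c_bounded : forall i n, \sum_(k < n) `|c k i| ^+ 2 <= Bc.

Definition Kc : R := nK Bc.

Lemma Kc_ge0 : 0 <= Kc.
Proof. exact: nK_ge0. Qed.

Lemma column_sum_le i m n : \sum_(m <= k < n) nK (c k i) ^+ 2 <= Kc.
Proof.
have Bc_ge0 : 0 <= Bc by have := c_bounded i 0; rewrite big_ord0.
have col0 p : \sum_(0 <= k < p) nK (c k i) ^+ 2 <= Kc.
  rewrite -emb_le rmorph_sum -ge0_emb // big_mkord.
  by under eq_bigr do rewrite rmorphXn -normE.
case: (leqP m n) => mn; last by rewrite big_geq ?Kc_ge0 // ltnW.
rewrite (big_nat_sub _ _ _ mn) lerBlDr (le_trans (col0 n)) // lerDl.
by apply: sumr_ge0 => k _; apply: sqr_ge0.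
Qed.

Lemma coef_sq_le i k : nK (c k i) ^+ 2 <= Kc.
Proof. by have := column_sum_le i k k.+1; rewrite big_nat1. Qed.

Definition partial_coef (v w : V) k n : K :=
  \sum_(0 <= i < n) ip v (e i) * ip w (e i) * c k i.

Lemma coef_block_sq_le v w k m n :
  nK (\sum_(m <= i < n) ip v (e i) * ip w (e i) * c k i) ^+ 2 <=
  (\sum_(m <= i < n) nK (ip v (e i)) ^+ 2) *
  (\sum_(m <= i < n) nK (ip w (e i)) ^+ 2 * nK (c k i) ^+ 2).
Proof.
set a := fun i => nK (ip v (e i)); set b := fun i => nK (ip w (e i)) * nK (c k i).
apply: (le_trans (y := (\sum_(m <= i < n) a i * b i) ^+ 2)).
  rewrite lerXn2r ?nnegrE ?nK_ge0 //.
    by apply: sumr_ge0 => i _; rewrite !mulr_ge0 ?nK_ge0.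
  by apply: le_trans (nK_sum _ _ _) _; apply: ler_sum => i _; rewrite !nKM mulrA.
apply: le_trans (cauchy_schwarz_nat _ _ _ _) _.
by rewrite /b; under [X in _ * X <= _]eq_bigr do rewrite exprMn.
Qed.

(* Each coordinate series converges: its blocks are bounded by the Fourier
   tails of v times K ||w||^2. *)
Lemma partial_coef_cauchy v w k : kcauchyR (partial_coef v w k).
Proof.
have block_lt eps : 0 < eps -> exists N, forall m n, (N <= m <= n)%N ->
    nK (partial_coef v w k n - partial_coef v w k m) < eps.
  move=> eps_gt0; set W := Kc * Nv w + 1.
  have W_gt0 : 0 < W by rewrite ltr_wpDl ?mulr_ge0 ?Kc_ge0 ?Nv_ge0.
  have [N HN] := fourier_tail v (eps ^+ 2 / W) ltac:(by rewrite divr_gt0 ?exprn_gt0).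
  exists N => m n /[dup] /HN tail /andP[_ mn].
  rewrite -(ltr_pXn2r (n := 2)) ?nnegrE ?nK_ge0 ?ltW // /partial_coef.
  rewrite -big_nat_sub //; apply: le_lt_trans (coef_block_sq_le _ _ _ _ _) _.
  have w_part : \sum_(m <= i < n) nK (ip w (e i)) ^+ 2 * nK (c k i) ^+ 2 <= W.
    apply: le_trans (ler_sum _ (fun i _ => ler_wpM2l (sqr_ge0 _) (coef_sq_le i k))) _.
    rewrite -mulr_suml mulrC (le_trans (y := Kc * Nv w)) ?lerDl //.
    by rewrite ler_wpM2l ?Kc_ge0 ?bessel.
  apply: le_lt_trans (ler_wpM2l _ w_part) _; last by rewrite -ltr_pdivlMr.
  by apply: sumr_ge0 => i _; apply: sqr_ge0.
move=> eps /block_lt[N HN]; exists N => m n Nm Nn.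
case: (leqP m n) => [mn|/ltnW nm]; first by rewrite nKB HN // Nm.
by rewrite HN // Nn.
Qed.

Definition coef (v w : V) k : K :=
  proj1_sig (cid (kcomplete _ (partial_coef_cauchy v w k))).

Lemma coefP v w k : kconvR (partial_coef v w k) (coef v w k).
Proof. exact: proj2_sig (cid _). Qed.

Lemma partial_coef_ell2 v w N n :
  \sum_(0 <= k < N) nK (partial_coef v w k n) ^+ 2 <= Kc * (Nv v * Nv w).
Proof.
apply: le_trans (ler_sum _ (fun k _ => coef_block_sq_le v w k 0 n)) _.
rewrite -mulr_sumr exchange_big /= mulrCA.
apply: ler_pM; [exact/sumr_ge0/(fun i _ => sqr_ge0 _) | | exact: bessel |].
  by apply: sumr_ge0 => i _; apply: sumr_ge0 => k _; rewrite mulr_ge0 ?sqr_ge0.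
apply: (le_trans (y := \sum_(0 <= i < n) nK (ip w (e i)) ^+ 2 * Kc)).
  by apply: ler_sum => i _; rewrite -mulr_sumr ler_wpM2l ?sqr_ge0 ?column_sum_le.
by rewrite -mulr_suml mulrC ler_wpM2l ?Kc_ge0 ?bessel.
Qed.

Lemma coef_ell2 v w N :
  \sum_(0 <= k < N) nK (coef v w k) ^+ 2 <= 2 * (Kc * (Nv v * Nv w)).
Proof.
rewrite -Nv_comb; apply: Nv_limit_le (vconvR_comb _ _ _ _ (coefP v w)) _ => n.
by rewrite Nv_comb partial_coef_ell2.
Qed.

Definition coef_series (v w : V) N : V := \sum_(0 <= k < N) coef v w k *: e k.

Lemma coef_series_cauchy v w : vcauchyR (coef_series v w).
Proof.
pose s N := \sum_(0 <= k < N) nK (coef v w k) ^+ 2.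
have s_incr N : s N <= s N.+1 by rewrite /s big_nat_recr //= lerDl sqr_ge0.
have Nv_diff m n : (m <= n)%N -> Nv (coef_series v w n - coef_series v w m) = s n - s m.
  by move=> mn; rewrite /coef_series -(big_nat_sub _ _ _ mn) Nv_comb big_nat_sub.
move=> eps eps_gt0.
have [N HN] := nondecreasing_bounded_cauchy _ _ s_incr (coef_ell2 v w) _ eps_gt0.
exists N => m n Nm Nn; case: (leqP m n) => [mn|/ltnW nm].
  by rewrite NvB Nv_diff ?HN ?Nm.
by rewrite Nv_diff ?HN ?Nn.
Qed.

Definition prod (v w : V) : V := proj1_sig (cid (complete _ (coef_series_cauchy v w))).

Lemma prodP v w : vconvR (coef_series v w) (prod v w).
Proof. exact: proj2_sig (cid _). Qed.

Lemma Nv_prod_le v w : Nv (prod v w) <= 4 * (Kc * (Nv v * Nv w)).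
Proof.
have -> : 4 * (Kc * (Nv v * Nv w)) = 2 * (2 * (Kc * (Nv v * Nv w))) by ring.
by apply: Nv_limit_le (prodP v w) _ => N; rewrite Nv_comb coef_ell2.
Qed.

Lemma prod_unique v w a x : (forall k, kconvR (partial_coef v w k) (a k)) ->
  vconvR (fun N => \sum_(0 <= k < N) a k *: e k) x -> prod v w = x.
Proof.
move=> conv_a conv_x; apply: (vconvR_uniq _ conv_x).
apply: (vconvR_ext _ (prodP v w)) => N.
by apply: eq_bigr => k _; rewrite (kconvR_uniq (coefP v w k) (conv_a k)).
Qed.

Lemma partial_coefDl a u v w k n :
  partial_coef (a *: u + v) w k n = a * partial_coef u w k n + partial_coef v w k n.
Proof.
rewrite /partial_coef mulr_sumr -big_split /=; apply: eq_bigr => i _.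
by rewrite ipL; ring.
Qed.

Lemma partial_coefDr a u v w k n :
  partial_coef u (a *: v + w) k n = a * partial_coef u v k n + partial_coef u w k n.
Proof.
rewrite /partial_coef mulr_sumr -big_split /=; apply: eq_bigr => i _.
by rewrite ipL; ring.
Qed.

Lemma comb_lin (a : K) (x y : nat -> K) (f : nat -> V) N :
  \sum_(0 <= k < N) (a * x k + y k) *: f k =
  a *: \sum_(0 <= k < N) x k *: f k + \sum_(0 <= k < N) y k *: f k.
Proof.
rewrite scaler_sumr -big_split /=; apply: eq_bigr => k _.
by rewrite scalerDl scalerA.
Qed.

Lemma prodDl a u v w : prod (a *: u + v) w = a *: prod u w + prod v w.
Proof.
apply: (prod_unique _ _ (fun k => a * coef u w k + coef v w k)) => [k|].
  apply: (kconvR_ext (fun n => esym (partial_coefDl _ _ _ _ _ _))).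
  exact: kconvR_lin (coefP u w k) (coefP v w k).
apply: (vconvR_ext (fun N => esym (comb_lin _ _ _ _ _))).
exact: vconvR_lin (prodP u w) (prodP v w).
Qed.

Lemma prodDr a u v w : prod u (a *: v + w) = a *: prod u v + prod u w.
Proof.
apply: (prod_unique _ _ (fun k => a * coef u v k + coef u w k)) => [k|].
  apply: (kconvR_ext (fun n => esym (partial_coefDr _ _ _ _ _ _))).
  exact: kconvR_lin (coefP u v k) (coefP u w k).
apply: (vconvR_ext (fun N => esym (comb_lin _ _ _ _ _))).
exact: vconvR_lin (prodP u v) (prodP u w).
Qed.

Lemma partial_coef_e i j k n : (i < n)%N ->
  partial_coef (e i) (e j) k n = (i == j)%:R * c k i.
Proof.
move=> i_lt_n; rewrite /partial_coef (bigD1_seq i) ?mem_iota ?subn0 ?iota_uniq //=.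
rewrite !e_orthonormal eqxx mul1r [j == i]eq_sym big1 ?addr0 // => l /negbTE l_neq_i.
by rewrite e_orthonormal eq_sym l_neq_i !mul0r.
Qed.

Lemma prod_ee i : vconvR (fun N => \sum_(0 <= k < N) c k i *: e k) (prod (e i) (e i)).
Proof.
apply: (vconvR_ext _ (prodP _ _)) => N; apply: eq_bigr => k _; congr (_ *: _).
apply: (kconvR_uniq (coefP _ _ _)); apply: kconvR_eventually.
by exists i.+1 => n i_lt_n; rewrite partial_coef_e // eqxx mul1r.
Qed.

Lemma prod_eij i j : i != j -> prod (e i) (e j) = 0.
Proof.
move=> /negbTE ij; apply: (prod_unique _ _ (fun _ => 0)) => [k|].
  by apply: kconvR_eventually; exists i.+1 => n i_lt_n; rewrite partial_coef_e // ij mul0r.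
by apply: (vconvR_ext _ (vconvR_const 0)) => N; rewrite big1 // => k _; rewrite scale0r.
Qed.

Lemma prod_bounded v : exists M : K, 0 < M /\
  forall w, nsq ip (prod v w) <= M ^+ 2 * nsq ip w.
Proof.
set x := 4 * (Kc * Nv v); have x_ge0 : 0 <= x by rewrite !mulr_ge0 ?Kc_ge0 ?Nv_ge0.
exists (emb (x + 1)); split => [|w]; first by rewrite emb_gt0 ltr_wpDl.
rewrite !nsq_emb -rmorphXn -rmorphM emb_le; apply: le_trans (Nv_prod_le v w) _.
have -> : 4 * (Kc * (Nv v * Nv w)) = x * Nv w by rewrite /x; ring.
by rewrite ler_wpM2r ?Nv_ge0 //; nra.
Qed.

Lemma evolution_algebra_exists : exists prod : V -> V -> V,
  (forall v w, exists a : nat -> K,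
     (forall k, kconv (fun n => \sum_(i < n) ip v (e i) * ip w (e i) * c k i) (a k)) /\
     vconv ip (fun n => \sum_(k < n) a k *: e k) (prod v w)) /\
  hilbert_evolution_algebra cj ip prod e c.
Proof.
exists prod; split.
  move=> v w; exists (coef v w); split.
    move=> k; apply/kconvP; apply: (kconvR_ext _ (coefP v w k)) => n.
    by rewrite /partial_coef big_mkord.
  by apply/vconvP; apply: (vconvR_ext _ (prodP v w)) => n; rewrite /coef_series big_mkord.
split; [by split | by split | split].
- exact: prodDl.
- exact: prodDr.
- by move=> i; apply/vconvP; apply: (vconvR_ext _ (prod_ee i)) => n; rewrite big_mkord.
- exact: prod_eij.
- exact: prod_bounded.
Qed.

End Product.
End Orthonormal.
End InnerProduct.
End Scalars.

Lemma evolution_theorem_for (R : realType) (K : numFieldType)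
    (emb : {rmorphism R -> K}) (nK : K -> R) (cj : {rmorphism K -> K}) :
  (forall x, `|x| = emb (nK x)) ->
  (forall r s, (emb r <= emb s) = (r <= s)) ->
  (forall x, x * cj x = emb (nK x ^+ 2)) ->
  forall (V : lmodType K) (ip : V -> V -> K), theorem_for cj ip.
Proof.
move=> normE emb_le mul_conj V ip e c [ipL ip_conj ip_ge0 ip_eq0 ip_complete].
by move=> [e_orthonormal e_expansion] [Bc c_bounded]; apply: evolution_algebra_exists.
Qed.

Theorem mainTheorem2 (R : realType) :
  (forall V : lmodType R, forall ip : V -> V -> R,
     theorem_for (fun x : R => x) ip) /\
  (forall V : lmodType R[i], forall ip : V -> V -> R[i],
     theorem_for (fun x : R[i] => x^*) ip).
Proof.
split.
- apply: (@evolution_theorem_for R R idfun Num.norm idfun) => // x.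
  by rewrite real_normK ?num_real // expr2.
- apply: (@evolution_theorem_for R R[i] (real_complex R) (fun z => complex.Re `|z|) Num.conj).
  + by move=> x; apply/esym/RRe_real/normr_real.
  + by move=> r s; rewrite lecR.
  + by move=> x; rewrite rmorphXn -normCK; congr (_ ^+ 2); apply/esym/RRe_real/normr_real.
Qed.
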